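(* Let $\Pi$ be a positive semidefinite operator on $(\mathbb{C}^2)^{\otimes n}$ with $\Pi\le\mathbb{1}$ (a POVM element) that has at least one nonzero off-diagonal entry with respect to the computational basis. Then there exist phases $\theta_{\bm{y}}\in[0,2\pi]$, $\bm{y}\in\{0,1\}^n$, such that for $|\psi\rangle=\frac{1}{\sqrt{2^n}}\sum_{\bm{y}}e^{i\theta_{\bm{y}}}|\bm{y}\rangle$ and $W_\psi=\frac{1}{2^n}\mathbb{1}-|\psi\rangle\langle\psi|$ one has $\operatorname{tr}[W_\psi\Pi]\neq 0$.
   Context: $\{|\bm{y}\rangle:\bm{y}\in\{0,1\}^n\}$ is the computational basis of the $n$-qubit space. $W_\psi$ is called the $\psi$-induced quantum noise witness, and it ''detects'' $\Pi$ when $\operatorname{tr}[W_\psi\Pi]\ne0$. *)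

From HB Require Import structures.
From mathcomp Require Import all_boot all_order all_algebra.
From mathcomp Require Import complex.
From mathcomp Require Import reals trigo.
Set Implicit Arguments. Unset Strict Implicit. Unset Printing Implicit Defensive.
Import Order.TTheory GRing.Theory Num.Theory.
Local Open Scope ring_scope.
Local Open Scope complex_scope.

Definition adjmx (R : rcfType) (m n : nat) (A : 'M[R[i]]_(m, n)) : 'M[R[i]]_(n, m) :=
  (map_mx Num.conj A)^T.

Definition psd (R : rcfType) (N : nat) (A : 'M[R[i]]_N) : Prop :=
  adjmx A = A /\ forall v : 'cV[R[i]]_N, 0 <= (adjmx v *m A *m v) 0 0.

Definition povm_element (R : rcfType) (N : nat) (A : 'M[R[i]]_N) : Prop :=
  psd A /\ psd (1%:M - A).

Definition has_offdiag (R : rcfType) (N : nat) (A : 'M[R[i]]_N) : Prop :=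
  exists i j : 'I_N, i != j /\ A i j != 0.

Definition expi (R : realType) (t : R) : R[i] := (cos t) +i* (sin t).

(* |psi> = 2^{-n/2} sum_y e^{i theta_y} |y>, basis states y in {0,1}^n indexed by 'I_(2^n) *)
Definition phase_state (R : realType) (n : nat) (theta : 'I_(2 ^ n) -> R)
  : 'cV[R[i]]_(2 ^ n) :=
  \col_(y < 2 ^ n) ((Num.sqrt (2 ^+ n : R))^-1%:C * expi (theta y)).

Definition witness (R : realType) (n : nat) (psi : 'cV[R[i]]_(2 ^ n)) : 'M[R[i]]_(2 ^ n) :=
  ((2 ^+ n : R[i])^-1)%:M - psi *m adjmx psi.

(* If tr[W_psi Pi] vanished for every choice of phases, the quadratic form
   u^* Pi u would equal tr Pi on every vector u whose entries are fourth roots of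
   unity.  Polarizing in one coordinate a over the four values 1, i, -1, -i
   shows that sum_(z <> a) Pi_az u_z = 0 for all such u; letting u_b alone
   change sign then forces Pi_ab = 0 for every b <> a.  Fourth roots of unity
   are e^(i theta) for theta in {0, pi/2, pi, 3pi/2}, inside [0, 2pi]. *)

From HB Require Import structures.
From mathcomp Require Import all_boot all_order all_algebra.
From mathcomp Require Import complex.
From mathcomp Require Import reals trigo.
From mathcomp Require Import ring lra.
From Stdlib Require Import Classical.
Set Implicit Arguments. Unset Strict Implicit. Unset Printing Implicit Defensive.
Import Order.TTheory GRing.Theory Num.Theory.
Local Open Scope ring_scope.

Section QuadraticForm.
Variables (R : rcfType) (N : nat) (A : 'M[R[i]]_N).

Definition qform (u : 'cV[R[i]]_N) : R[i] := (adjmx u *m A *m u) 0 0.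

Lemma qformE u : qform u = \sum_y \sum_z (u y 0)^* * A y z * u z 0.
Proof.
rewrite /qform mxE exchange_big /=; apply: eq_bigr => z _.
rewrite mxE big_distrl /=; apply: eq_bigr => y _.
by rewrite !mxE.
Qed.

Lemma qformZ c u : qform (c *: u) = c^* * c * qform u.
Proof.
rewrite !qformE !mulr_sumr; apply: eq_bigr => y _.
rewrite mulr_sumr; apply: eq_bigr => z _.
by rewrite !mxE rmorphM /=; ring.
Qed.

Lemma mxtrace_proj_mul (u : 'cV[R[i]]_N) : \tr (u *m adjmx u *m A) = qform u.
Proof. by rewrite -mulmxA mxtrace_mulC trace_mx11. Qed.

Definition set_coord (u : 'cV[R[i]]_N) a x : 'cV[R[i]]_N :=
  \col_y (if y == a then x else u y 0).

Lemma set_coord_id u a x : set_coord u a x a 0 = x.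
Proof. by rewrite mxE eqxx. Qed.

Lemma set_coord_other u a x y : y != a -> set_coord u a x y 0 = u y 0.
Proof. by move=> ya; rewrite mxE (negbTE ya). Qed.

Definition row_rest a (u : 'cV[R[i]]_N) := \sum_(z | z != a) A a z * u z 0.
Definition col_rest a (u : 'cV[R[i]]_N) := \sum_(y | y != a) (u y 0)^* * A y a.
Definition minor_qform a (u : 'cV[R[i]]_N) :=
  \sum_(y | y != a) \sum_(z | z != a) (u y 0)^* * A y z * u z 0.

Lemma qform_set_coord u a x :
  qform (set_coord u a x) =
  x^* * x * A a a + x^* * row_rest a u + x * col_rest a u + minor_qform a u.
Proof.
rewrite qformE (bigD1 a) //= (bigD1 a) //= set_coord_id.
under eq_bigr => z za do rewrite set_coord_other //.
under [X in _ + _ + X = _]eq_bigr => y ya.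
  rewrite (bigD1 a) //= set_coord_id set_coord_other //.
  under eq_bigr => z za do rewrite !set_coord_other //.
  over.
rewrite big_split /= /row_rest /col_rest /minor_qform !mulr_sumr -!addrA.
congr (_ + (_ + (_ + _))); first ring.
- by apply: eq_bigr => z _; ring.
- by apply: eq_bigr => y _; ring.
Qed.

(* Summing w * qform (set_coord u a w) over the fourth roots of unity w cancels
   every term except the one linear in w^*. *)
Lemma row_rest_polarization u a :
  4 * row_rest a u =
  qform (set_coord u a 1) - qform (set_coord u a (-1))
  + 'i * (qform (set_coord u a 'i) - qform (set_coord u a (- 'i))).
Proof.
have conji : ('i : R[i])^* = - 'i by rewrite conjCi.
have conjNi : (- 'i : R[i])^* = 'i by rewrite -conjCi conjCK.
have conjN1 : (-1 : R[i])^* = -1 by rewrite rmorphN1.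
rewrite !qform_set_coord conjC1 conjN1 conji conjNi.
have : 'i * 'i = -1 :> R[i] by rewrite -expr2 sqrCi.
move: ('i : R[i]) => j sqr_j; apply/eqP; rewrite -subr_eq0; apply/eqP.
transitivity ((j * j + 1) * (2 * (row_rest a u - col_rest a u))); first by ring.
by rewrite sqr_j addNr mul0r.
Qed.

Lemma row_rest_eq0 u a k :
  (forall m, qform (set_coord u a ('i ^+ m)) = k) -> row_rest a u = 0.
Proof.
move=> qform_k.
have q1 : qform (set_coord u a 1) = k by rewrite -(qform_k 0%N) expr0.
have qN1 : qform (set_coord u a (-1)) = k by rewrite -(qform_k 2%N) sqrCi.
have qi : qform (set_coord u a 'i) = k by rewrite -(qform_k 1%N) expr1.
have qNi : qform (set_coord u a (- 'i)) = k.
  by rewrite -(qform_k 3%N) exprS sqrCi mulrN1.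
have /eqP := row_rest_polarization u a.
by rewrite q1 qN1 qi qNi !subrr mulr0 addr0 mulf_eq0 pnatr_eq0 => /eqP.
Qed.

Lemma row_rest_set_coord u a b x : a != b ->
  row_rest a (set_coord u b x) = x * A a b + row_rest a (set_coord u b 0).
Proof.
move=> ab; have ba : b != a by rewrite eq_sym.
rewrite /row_rest !(bigD1 b ba) /= !set_coord_id mulr0 add0r mulrC.
congr (_ + _); apply: eq_bigr => z /andP [_ zb].
by rewrite !set_coord_other.
Qed.

(* With all phases 1 except at [a] and [b], [row_rest a] is affine in the phase
   at [b] with slope [A a b], and it vanishes for every phase at [b]. *)
Lemma offdiag_eq0_of_qform_const k :
  (forall f : 'I_N -> nat, qform (\col_y 'i ^+ f y) = k) ->
  forall a b, a != b -> A a b = 0.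
Proof.
move=> qform_k a b ab.
pose one : 'cV[R[i]]_N := const_mx 1.
set r := row_rest a (set_coord one b 0).
have row_rest0 m : 'i ^+ m * A a b + r = 0.
  rewrite -(row_rest_set_coord _ _ ab); apply: (@row_rest_eq0 _ _ k) => p.
  rewrite -(qform_k (fun y => if y == a then p else if y == b then m else 0%N)).
  congr qform; apply/matrixP => y j; rewrite ord1 !mxE.
  by case: eqP => // _; case: eqP => // _; rewrite expr0.
have := row_rest0 0%N; have := row_rest0 2%N.
rewrite sqrCi expr0 mulN1r mul1r addrC => /eqP; rewrite subr_eq0 => /eqP <-.
by rewrite -mulr2n => /eqP; rewrite mulrn_eq0 /= => /eqP.
Qed.

End QuadraticForm.

Section Phases.
Variable R : realType.

Lemma expiD (s t : R) : expi (s + t) = expi s * expi t.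
Proof.
by rewrite /expi cosD sinD; apply/eqP; rewrite eq_complex /= eqxx [sin s * _ + _]addrC eqxx.
Qed.

Definition quarter_turns (k : nat) : R := (k %% 4)%:R * (pi / 2).

Lemma quarter_turns_range k : 0 <= quarter_turns k <= 2 * pi.
Proof.
rewrite /quarter_turns; set m : R := (k %% 4)%:R.
have m_ge0 : 0 <= m by rewrite ler0n.
have m_le4 : m <= 4 by rewrite ler_nat ltnW // ltn_pmod.
have := pi_gt0 R; nra.
Qed.

Lemma expi_quarter_turns k : expi (quarter_turns k) = 'i ^+ k.
Proof.
rewrite /quarter_turns -(expr_mod k (_ : 'i ^+ 4 = 1)); last first.
  by rewrite (exprM _ 2 2) sqrCi sqrrN expr1n.
elim: (k %% 4)%N => [|m IHm]; first by rewrite mul0r /expi cos0 sin0.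
by rewrite mulrSr mulrDl mul1r expiD IHm /expi cos_pihalf sin_pihalf exprSr.
Qed.

Lemma witness_trace_eq0 n (A : 'M[R[i]]_(2 ^ n)) (theta : 'I_(2 ^ n) -> R) :
  (\tr (witness (phase_state theta) *m A) == 0) =
  (qform A (\col_y expi (theta y)) == \tr A).
Proof.
set s : R := (Num.sqrt (2 ^+ n))^-1.
have s_ge0 : 0 <= s by rewrite invr_ge0 sqrtr_ge0.
have -> : phase_state theta = (s%:C)%C *: \col_y expi (theta y).
  by apply/matrixP => y j; rewrite !mxE.
have ss : (s%:C)%C^* * (s%:C)%C = (2 ^+ n)^-1 :> R[i].
  rewrite geC0_conj ?lecR // -rmorphM -expr2 exprVn sqr_sqrtr ?exprn_ge0 //.
  by rewrite -natrX rmorphV ?unitfE ?pnatr_eq0 ?expn_eq0 // rmorph_nat natrX.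
rewrite /witness mulmxBl mul_scalar_mx linearB /= mxtraceZ mxtrace_proj_mul.
rewrite qformZ ss -mulrBr mulf_eq0 invr_eq0 expf_eq0 pnatr_eq0 andbF /=.
by rewrite subr_eq0 eq_sym.
Qed.

End Phases.

Theorem proposition2 (R : realType) (n : nat) (Pi : 'M[R[i]]_(2 ^ n)) :
  povm_element Pi -> has_offdiag Pi ->
  exists theta : 'I_(2 ^ n) -> R,
    (forall y, 0 <= theta y <= 2 * pi) /\
    \tr (witness (phase_state theta) *m Pi) != 0.
Proof.
move=> _ [a [b [ab Pi_ab]]]; apply: NNPP => no_witness.
have qform_const (f : 'I_(2 ^ n) -> nat) : qform Pi (\col_y 'i ^+ f y) = \tr Pi.
  pose theta y := quarter_turns R (f y).
  have : \tr (witness (phase_state theta) *m Pi) == 0.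
    apply: contra_notT no_witness => tr_neq0; exists theta.
    by split=> // y; apply: quarter_turns_range.
  rewrite witness_trace_eq0 => /eqP <-; congr qform.
  by apply/matrixP => y j; rewrite !mxE expi_quarter_turns.
by move: Pi_ab; rewrite (offdiag_eq0_of_qform_const qform_const ab) eqxx.
Qed.
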